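(* Let $t\ge 2$ and let $\mathcal{P}_t$ be the semilattice on $\{0,1,\dots,t\}$ in which $0$ is the greatest element and $1,\dots,t$ are pairwise incomparable (so $i+j=0$ for $i\ne j$ and $i+i=i$). Let $\operatorname{End}^0(\mathcal{P}_t)$ be the set of endomorphisms of $\mathcal{P}_t$ fixing $0$. Then $\operatorname{End}^0(\mathcal{P}_t)$ is a subsemiring of $\operatorname{End}(\mathcal{P}_t)$, this subsemiring is isomorphic to the rook semiring $\mathcal{R}_t$, and every endomorphism in $\operatorname{End}(\mathcal{P}_t)\setminus\operatorname{End}^0(\mathcal{P}_t)$ is a constant map.
   Context: For a semilattice $\mathcal{A}=(A,+)$, $\operatorname{End}(\mathcal{A})$ is the semiring of all maps $\alpha:A\to A$ with $(a+b)\alpha=a\alpha+b\alpha$, under pointwise addition and composition (maps written on the right, $a(\alpha\beta)=(a\alpha)\beta$). A $t\times t$ rook matrix is a $0$-$1$ matrix with at most one entry $1$ in each row and each column. The rook semiring $\mathcal{R}_t$ is the set $R_t$ of all $t\times t$ rook matrices with addition the entrywise (Hadamard) product $a+b=(a_{ij}b_{ij})$ and multiplication the usual matrix product. *)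

From HB Require Import structures.
From mathcomp Require Import all_boot all_order all_algebra.
Set Implicit Arguments. Unset Strict Implicit. Unset Printing Implicit Defensive.
Import GRing.Theory.
Local Open Scope ring_scope.

Definition padd (t : nat) (i j : 'I_t.+1) : 'I_t.+1 :=
  if i == j then i else ord0.

Definition is_end (t : nat) (f : {ffun 'I_t.+1 -> 'I_t.+1}) : Prop :=
  forall a b : 'I_t.+1, f (padd a b) = padd (f a) (f b).

Definition is_end0 (t : nat) (f : {ffun 'I_t.+1 -> 'I_t.+1}) : Prop :=
  is_end f /\ f ord0 = ord0.

(* Semiring operations on End(P_t): pointwise addition, and composition with
   maps written on the right: a (f g) = (a f) g. *)
Definition end_add (t : nat) (f g : {ffun 'I_t.+1 -> 'I_t.+1})
  : {ffun 'I_t.+1 -> 'I_t.+1} := [ffun a => padd (f a) (g a)].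
Definition end_mul (t : nat) (f g : {ffun 'I_t.+1 -> 'I_t.+1})
  : {ffun 'I_t.+1 -> 'I_t.+1} := [ffun a => g (f a)].

Definition is_rook (t : nat) (A : 'M[int]_t) : Prop :=
  [/\ (forall i j, A i j = 0 \/ A i j = 1),
      (forall i j k, A i j = 1 -> A i k = 1 -> j = k) &
      (forall i k j, A i j = 1 -> A k j = 1 -> i = k)].

Definition rook_add (t : nat) (A B : 'M[int]_t) : 'M[int]_t :=
  \matrix_(i, j) (A i j * B i j).
Definition rook_mul (t : nat) (A B : 'M[int]_t) : 'M[int]_t := A *m B.

(* An endomorphism f of P_t must send distinct a, b to points whose join is
   f 0.  If f 0 <> 0 this forces f a = f 0 for every a, so f is constant.  If
   f 0 = 0, it means that f is injective away from the preimage of 0, i.e. a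
   partial injection of {1,...,t}; recording f i = j as the entry (i, j)
   gives a rook matrix, and this bijection turns pointwise join into the
   Hadamard product and composition into the matrix product. *)
From HB Require Import structures.
From mathcomp Require Import all_boot all_order all_algebra.
Set Implicit Arguments. Unset Strict Implicit. Unset Printing Implicit Defensive.
Import GRing.Theory.
Local Open Scope ring_scope.

Section EndPt.

Variable t : nat.
Implicit Types (f g : {ffun 'I_t.+1 -> 'I_t.+1}) (a b : 'I_t.+1).

Lemma padd_neq a b : a != b -> padd a b = ord0.
Proof. by rewrite /padd => /negbTE ->. Qed.

Lemma end_const f : is_end f -> f ord0 != ord0 -> forall a, f a = f ord0.
Proof.
move=> fE f0 a; have [-> // | a0] := eqVneq a ord0.
have := fE a ord0; rewrite padd_neq // /padd.
by case: eqP => // _ f0E; rewrite f0E eqxx in f0.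
Qed.

Lemma end0P f :
  is_end0 f <-> f ord0 = ord0 /\ (forall a b, a != b -> f a = f b -> f a = ord0).
Proof.
split=> [[fE f0] | [f0 fI]].
  by split=> // a b ab fab; move: (fE a b); rewrite padd_neq // f0 /padd fab eqxx.
split=> // a b; have [-> | ab] := eqVneq a b; first by rewrite /padd !eqxx.
rewrite padd_neq // f0 /padd; case: eqP => // fab.
by rewrite (fI a b ab fab).
Qed.

Lemma end0_add f g : is_end0 f -> is_end0 g -> is_end0 (end_add f g).
Proof.
move=> /end0P[f0 fI] /end0P[g0 _]; apply/end0P; split.
  by rewrite ffunE f0 g0 /padd eqxx.
move=> a b ab; rewrite !ffunE /padd.
case: (eqVneq (f a) (g a)) => [_ | //]; case: eqVneq => // _.
exact: fI.
Qed.

Lemma end0_mul f g : is_end0 f -> is_end0 g -> is_end0 (end_mul f g).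
Proof.
move=> /end0P[f0 fI] /end0P[g0 gI]; apply/end0P; split; first by rewrite ffunE f0.
move=> a b ab; rewrite !ffunE.
have [fab | /gI//] := eqVneq (f a) (f b).
by rewrite (fI a b ab fab).
Qed.

Definition rook_of_end f : 'M[int]_t :=
  \matrix_(i, j) (f (lift ord0 i) == lift ord0 j)%:R.

Lemma rook_of_end_eq1 f i j :
  rook_of_end f i j = 1 <-> f (lift ord0 i) = lift ord0 j.
Proof. by rewrite mxE; case: eqP. Qed.

Lemma rook_of_end_rook f : is_end0 f -> is_rook (rook_of_end f).
Proof.
move=> /end0P[_ fI]; split.
- by move=> i j; rewrite mxE; case: eqP; [right | left].
- move=> i j k /rook_of_end_eq1 fij /rook_of_end_eq1.
  by rewrite fij => /lift_inj.
- move=> i k j /rook_of_end_eq1 fij /rook_of_end_eq1 fkj.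
  apply: (@lift_inj _ ord0); apply/eqP/negPn/negP => ik.
  have /eqP := fI _ _ ik (etrans fij (esym fkj)).
  by rewrite fij eq_sym (negbTE (neq_lift _ _)).
Qed.

Lemma rook_of_end_inj f g :
  f ord0 = ord0 -> g ord0 = ord0 -> rook_of_end f = rook_of_end g -> f = g.
Proof.
move=> f0 g0 fg; apply/ffunP => a; case: (unliftP ord0 a) => [i -> | ->]; last first.
  by rewrite f0 g0.
have fgE j : f (lift ord0 i) = lift ord0 j <-> g (lift ord0 i) = lift ord0 j.
  by split=> /rook_of_end_eq1; [rewrite fg | rewrite -fg] => /rook_of_end_eq1.
case: (unliftP ord0 (f (lift ord0 i))) => [j /[dup] fj /fgE -> // | fi].
case: (unliftP ord0 (g (lift ord0 i))) => [j /[dup] gj /fgE | gi].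
  by rewrite fi => /eqP; rewrite (negbTE (neq_lift _ _)).
by rewrite fi gi.
Qed.

Definition end_of_rook (A : 'M[int]_t) : {ffun 'I_t.+1 -> 'I_t.+1} :=
  [ffun a => if unlift ord0 a is Some i then
     (if [pick j | A i j == 1] is Some j then lift ord0 j else ord0) else ord0].

Lemma end_of_rook0 A : end_of_rook A ord0 = ord0.
Proof. by rewrite ffunE unlift_none. Qed.

Lemma end_of_rook_lift A i :
  end_of_rook A (lift ord0 i) =
  if [pick j | A i j == 1] is Some j then lift ord0 j else ord0.
Proof. by rewrite ffunE liftK. Qed.

Lemma end_of_rook_end0 A : is_rook A -> is_end0 (end_of_rook A).
Proof.
move=> [_ _ Acol]; apply/end0P; split=> [|a b ab]; first exact: end_of_rook0.
case: (unliftP ord0 a) => [i ea | ->]; last by rewrite end_of_rook0.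
case: (unliftP ord0 b) => [k eb | ->]; last by rewrite end_of_rook0.
rewrite ea eb !end_of_rook_lift.
case: pickP => [j /eqP Aij|//]; case: pickP => [j' /eqP Akj'|//] /lift_inj jj'.
by move: ab; rewrite ea eb (Acol i k j Aij) ?jj' ?eqxx.
Qed.

Lemma end_of_rookK A : is_rook A -> rook_of_end (end_of_rook A) = A.
Proof.
move=> [A01 Arow _]; apply/matrixP => i j; rewrite mxE end_of_rook_lift.
case: pickP => [j' /eqP Aij' | noone].
  rewrite (inj_eq (@lift_inj _ ord0)); have [<- // | j'j] := eqVneq j' j.
  by case: (A01 i j) => // Aij; case/eqP: j'j; apply: Arow Aij' Aij.
rewrite (negbTE (neq_lift _ _)).
by case: (A01 i j) => // Aij; have := noone j; rewrite Aij eqxx.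
Qed.

Lemma rook_of_end_add f g :
  rook_of_end (end_add f g) = rook_add (rook_of_end f) (rook_of_end g).
Proof.
apply/matrixP => i j; rewrite !mxE ffunE /padd.
have [-> | fg] := eqVneq (f (lift ord0 i)) (g (lift ord0 i)); first by case: eqP.
rewrite (negbTE (neq_lift _ _)).
case: eqP => [fi | _]; case: eqP => [gi | _] //.
by move: fg; rewrite fi gi eqxx.
Qed.

Lemma rook_of_end_mul f g :
  g ord0 = ord0 ->
  rook_of_end (end_mul f g) = rook_mul (rook_of_end f) (rook_of_end g).
Proof.
move=> g0; apply/matrixP => i k; rewrite !mxE ffunE.
case: (unliftP ord0 (f (lift ord0 i))) => [j0 fi | fi].
  rewrite fi (bigD1 j0) //= !mxE fi eqxx mul1r big1 ?addr0 // => j j0j.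
  by rewrite mxE fi (inj_eq (@lift_inj _ ord0)) eq_sym (negbTE j0j) mul0r.
rewrite fi g0 (negbTE (neq_lift _ _)) big1 // => j _.
by rewrite mxE fi (negbTE (neq_lift _ _)) mul0r.
Qed.

End EndPt.

Theorem proposition3p9 (t : nat) (ht : (2 <= t)%N) :
  (* End^0(P_t) is a subsemiring of End(P_t) *)
  ((forall f : {ffun 'I_t.+1 -> 'I_t.+1}, is_end0 f -> is_end f) /\
   (forall f g : {ffun 'I_t.+1 -> 'I_t.+1}, is_end0 f -> is_end0 g -> is_end0 (end_add f g)) /\
   (forall f g : {ffun 'I_t.+1 -> 'I_t.+1}, is_end0 f -> is_end0 g -> is_end0 (end_mul f g))) /\
  (* End^0(P_t) is isomorphic to the rook semiring R_t *)
  (exists phi : {ffun 'I_t.+1 -> 'I_t.+1} -> 'M[int]_t,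
     (forall f : {ffun 'I_t.+1 -> 'I_t.+1}, is_end0 f -> is_rook (phi f)) /\
     (forall f g : {ffun 'I_t.+1 -> 'I_t.+1}, is_end0 f -> is_end0 g -> phi f = phi g -> f = g) /\
     (forall A : 'M[int]_t, is_rook A -> exists2 f, is_end0 f & phi f = A) /\
     (forall f g : {ffun 'I_t.+1 -> 'I_t.+1}, is_end0 f -> is_end0 g ->
        phi (end_add f g) = rook_add (phi f) (phi g)) /\
     (forall f g : {ffun 'I_t.+1 -> 'I_t.+1}, is_end0 f -> is_end0 g ->
        phi (end_mul f g) = rook_mul (phi f) (phi g))) /\
  (* every endomorphism not fixing 0 is constant *)
  (forall f : {ffun 'I_t.+1 -> 'I_t.+1}, is_end f -> ~ is_end0 f -> exists c, forall a, f a = c).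
Proof.
split.
  split; first by move=> f [].
  by split; [exact: end0_add | exact: end0_mul].
split.
  exists (@rook_of_end t); split; first exact: rook_of_end_rook.
  split; first by move=> f g [_ f0] [_ g0]; exact: rook_of_end_inj.
  split.
    by move=> A rA; exists (end_of_rook A); [exact: end_of_rook_end0 | exact: end_of_rookK].
  split; first by move=> f g _ _; exact: rook_of_end_add.
  by move=> f g _ [_ g0]; exact: rook_of_end_mul.
move=> f fE not_end0; exists (f ord0); apply: end_const => //.
by apply/eqP => f0; apply: not_end0.
Qed.
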